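(* Let $\mathcal{M}_1,\mathcal{M}_2$ be matroids on a finite ground set $E$. For any parameters $f,p\in(0,1)$, any arrival order and any values of the auxiliary bits, the sets $S,N_1,N_2$ produced by Marking-Greedy satisfy that $S\cup N_1\cup N_2$ is independent in both $\mathcal{M}_1$ and $\mathcal{M}_2$.
   Context: For $i\in\{1,2\}$, $\bar\imath$ denotes the other index, and $\mathrm{span}_i(T)=\{e\in E:\mathrm{rank}_{\mathcal{M}_i}(T\cup\{e\})=\mathrm{rank}_{\mathcal{M}_i}(T)\}$. Marking-Greedy with parameters $f,p$: elements of $E$ ($m=|E|$) arrive in an order $\pi$; auxiliary bits $\Psi(e)\in\{0,1\}$ are given (in the randomized algorithm, i.i.d. with $\Pr[\Psi(e)=1]=1-p$). Phase (a): start with $S=T=\emptyset$; for each of the first $fm$ arriving elements $e$, if $T\cup\{e\}$ is independent in both matroids, add $e$ to $T$, and if moreover $\Psi(e)=1$ add $e$ to $S$. Phase (b): let $T_f$ be the final $T$, set $N_1=N_2=\emptyset$; for each remaining arriving element $e$ and each $i\in\{1,2\}$: if $e\in\mathrm{span}_i(T_f)$, $e\notin\mathrm{span}_{\bar\imath}(T_f)$, $S\cup N_i\cup\{e\}$ is independent in $\mathcal{M}_i$ and $T_f\cup N_i\cup\{e\}$ is independent in $\mathcal{M}_{\bar\imath}$, then add $e$ to $N_i$. Output $S\cup N_1\cup N_2$. *)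

From HB Require Import structures.
From mathcomp Require Import all_boot all_order all_algebra.
Set Implicit Arguments. Unset Strict Implicit. Unset Printing Implicit Defensive.
Import Order.TTheory GRing.Theory Num.Theory.

Record matroid (E : finType) := Matroid {
  indep : {set E} -> bool;
  indep0 : indep set0;
  indep_sub : forall A B : {set E}, A \subset B -> indep B -> indep A;
  indep_exch : forall A B : {set E}, indep A -> indep B -> #|A| < #|B| ->
     exists2 e, e \in B :\: A & indep (e |: A)
}.

Section MarkingGreedy.
Variable E : finType.
Implicit Types (M : matroid E) (T : {set E}).

Definition mrank M (A : {set E}) : nat :=
  \max_(B : {set E} | (B \subset A) && indep M B) #|B|.

Definition mspan M T : {set E} :=
  [set e | mrank M (e |: T) == mrank M T].

Definition phaseA (M1 M2 : matroid E) (Psi : E -> bool) (s : seq E)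
  : {set E} * {set E} :=
  foldl (fun (ST : {set E} * {set E}) e =>
           let: (S0, T0) := ST in
           if indep M1 (e |: T0) && indep M2 (e |: T0)
           then ((if Psi e then e |: S0 else S0), e |: T0)
           else (S0, T0))
        (set0, set0) s.

Definition addB (Mi Mo : matroid E) (S0 Tf Ni : {set E}) (e : E) : bool :=
  [&& e \in mspan Mi Tf, e \notin mspan Mo Tf,
      indep Mi (e |: (S0 :|: Ni)) & indep Mo (e |: (Tf :|: Ni))].

Definition phaseB (M1 M2 : matroid E) (S0 Tf : {set E}) (s : seq E)
  : {set E} * {set E} :=
  foldl (fun (NN : {set E} * {set E}) e =>
           let: (N1, N2) := NN in
           let N1' := if addB M1 M2 S0 Tf N1 e then e |: N1 else N1 in
           let N2' := if addB M2 M1 S0 Tf N2 e then e |: N2 else N2 in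
           (N1', N2'))
        (set0, set0) s.

Definition marking_greedy (M1 M2 : matroid E) (Psi : E -> bool)
  (k : nat) (pi : seq E) : {set E} * {set E} * {set E} :=
  let: (S0, Tf) := phaseA M1 M2 Psi (take k pi) in
  let: (N1, N2) := phaseB M1 M2 S0 Tf (drop k pi) in
  (S0, N1, N2).

End MarkingGreedy.

(** Phase (a) leaves S inside T, and T independent in both matroids.  Each
    N_i lies in span_i(T) and avoids span_ī(T), while S ∪ N_i is independent
    in M_i and T ∪ N_i in M_ī.  In M_1 the set S ∪ N_1 is then an independent
    subset of span_1(T), and N_2 is disjoint from T with T ∪ N_2 independent:
    an independent set spanned by T can replace T next to N_2 (exchange
    argument), so S ∪ N_1 ∪ N_2 is independent in M_1; symmetrically in M_2. *)
From HB Require Import structures.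
From mathcomp Require Import all_boot all_order all_algebra.
Import Order.TTheory GRing.Theory Num.Theory.

Lemma foldl_inv (S T : Type) (P : S -> Prop) (f : S -> T -> S) (x : S) s :
  P x -> (forall y t, P y -> P (f y t)) -> P (foldl f x s).
Proof. by move=> Px Pf; elim: s x Px => [|t s IHs] x Px //=; apply/IHs/Pf. Qed.

Section MatroidSpan.
Context {E : finType} (M : matroid E).
Implicit Types (A B C D N T X : {set E}).

Lemma leq_card_mrank {A B} : B \subset A -> indep M B -> #|B| <= mrank M A.
Proof. by move=> sBA iB; apply: (@leq_bigmax_cond _ _ _ B); rewrite sBA iB. Qed.

Lemma mrank_leq_card A : mrank M A <= #|A|.
Proof. by apply/bigmax_leqP => B /andP[sBA _]; apply: subset_leq_card. Qed.

Lemma subset_mspan T : T \subset mspan M T.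
Proof. by apply/subsetP => e eT; rewrite inE (setUidPr _) // sub1set. Qed.

Lemma mspan_dep {T e} : indep M T -> e \in mspan M T -> e \notin T ->
  ~~ indep M (e |: T).
Proof.
move=> iT; rewrite inE => /eqP rkeT eT; apply/negP => ieT.
have := leq_card_mrank (subxx _) ieT; rewrite rkeT cardsU1 eT add1n.
by rewrite ltnNge mrank_leq_card.
Qed.

Lemma indep_card_mspan {T D} : indep M T -> D \subset mspan M T -> indep M D ->
  #|D| <= #|T|.
Proof.
move=> iT sDT iD; rewrite leqNgt; apply/negP => ltTD.
have [e /setDP[eD eT] ieT] := indep_exch iT iD ltTD.
by move: (mspan_dep iT (subsetP sDT e eD) eT); rewrite ieT.
Qed.

Lemma indep_extend {B X} : B \subset X -> indep M B ->
  exists C, [/\ B \subset C, C \subset X, indep M C &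
    forall D, D \subset X -> indep M D -> #|D| <= #|C|].
Proof.
move=> sBX iB.
pose P C := [&& B \subset C, C \subset X & indep M C].
have PB : P B by rewrite /P subxx sBX iB.
have [C /and3P[sBC sCX iC] maxC] := arg_maxnP (fun C => #|C|) PB.
exists C; split=> // D sDX iD; rewrite leqNgt; apply/negP => ltCD.
have [e /setDP[eD eC] ieC] := indep_exch iC iD ltCD.
have PeC : P (e |: C).
  by rewrite /P ieC (subset_trans sBC (subsetUr _ _)) subUset sub1set
    (subsetP sDX e eD) sCX.
have : #|e |: C| <= #|C| := maxC _ PeC.
by rewrite cardsU1 eC add1n ltnn.
Qed.

(* With X = A ∪ T ∪ N, a maximum independent C ⊇ A of X has at most |T|
   elements in the span of T, hence at least |N| outside it: all of N. *)
Lemma indep_setU_mspan T A N : indep M T -> indep M (T :|: N) ->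
  [disjoint N & T] -> A \subset mspan M T -> indep M A -> indep M (A :|: N).
Proof.
move=> iT iTN dNT sAT iA.
set Y := A :|: T.
have sYT : Y \subset mspan M T by rewrite subUset sAT subset_mspan.
have sAX : A \subset Y :|: N by rewrite -setUA subsetUl.
have [C [sAC sCX iC maxC]] := indep_extend sAX iA.
have cardTN : #|T| + #|N| <= #|C|.
  rewrite -cardsUI setIC (disjoint_setI0 dNT) cards0 addn0.
  by apply: maxC iTN; rewrite setSU // subsetUr.
have cardCY : #|C :&: Y| <= #|T|.
  apply: indep_card_mspan iT (subset_trans (subsetIr _ _) sYT) _.
  exact: indep_sub (subsetIl _ _) iC.
have sCYN : C :\: Y \subset N.
  apply/subsetP => e /setDP[eC eY].
  by move: (subsetP sCX e eC); rewrite inE (negbTE eY).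
have -> : N = C :\: Y.
  apply/esym/eqP; rewrite eqEcard sCYN -(leq_add2l #|C :&: Y|) cardsID.
  exact: leq_trans (leq_add cardCY (leqnn _)) cardTN.
by apply: indep_sub iC; rewrite subUset sAC subsetDl.
Qed.

End MatroidSpan.

Section MarkingGreedyInvariants.
Context {E : finType} (M1 M2 : matroid E).

Lemma phaseA_indep Psi s : let: (S0, Tf) := phaseA M1 M2 Psi s in
  [&& S0 \subset Tf, indep M1 Tf & indep M2 Tf].
Proof.
pattern (phaseA M1 M2 Psi s); apply: foldl_inv => [|[S0 T0] e].
  by rewrite sub0set !indep0.
case: ifP => [/andP[ie1 ie2] /and3P[sST _ _]|_ //]; rewrite ie1 ie2 andbT.
by case: (Psi e); rewrite ?setUS // (subset_trans sST (subsetUr _ _)).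
Qed.

Definition phaseB_inv (Mi Mo : matroid E) (S0 Tf Ni : {set E}) :=
  [&& indep Mi (S0 :|: Ni), indep Mo (Tf :|: Ni), Ni \subset mspan Mi Tf
    & [disjoint Ni & mspan Mo Tf]].

Lemma phaseB_inv_addB {Mi Mo S0 Tf Ni} e : phaseB_inv Mi Mo S0 Tf Ni ->
  phaseB_inv Mi Mo S0 Tf (if addB Mi Mo S0 Tf Ni e then e |: Ni else Ni).
Proof.
case: ifP => // /and4P[eTi eTo ieSN ieTN] /and4P[_ _ sNi dNo].
rewrite /phaseB_inv setUCA ieSN setUCA ieTN subUset sub1set eTi sNi.
by move: dNo; rewrite !disjoints_subset subUset sub1set inE eTo.
Qed.

Lemma phaseB_indep {S0 Tf} s :
  phaseB_inv M1 M2 S0 Tf set0 -> phaseB_inv M2 M1 S0 Tf set0 ->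
  let: (N1, N2) := phaseB M1 M2 S0 Tf s in
  phaseB_inv M1 M2 S0 Tf N1 /\ phaseB_inv M2 M1 S0 Tf N2.
Proof.
move=> inv1 inv2; pattern (phaseB M1 M2 S0 Tf s); apply: foldl_inv => //.
by move=> -[N1 N2] e [] /(phaseB_inv_addB e) ? /(phaseB_inv_addB e).
Qed.

Lemma phaseB_inv0 {Mi Mo : matroid E} {S0 Tf : {set E}} :
  S0 \subset Tf -> indep Mi Tf -> indep Mo Tf -> phaseB_inv Mi Mo S0 Tf set0.
Proof.
move=> sST iTi iTo; rewrite /phaseB_inv !setU0 iTo sub0set.
rewrite disjoints_subset sub0set !andbT.
exact: indep_sub sST iTi.
Qed.

Lemma phaseB_inv_indep {Mi Mo : matroid E} {S0 Tf Ni No : {set E}} :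
  S0 \subset Tf -> indep Mi Tf -> phaseB_inv Mi Mo S0 Tf Ni ->
  phaseB_inv Mo Mi S0 Tf No -> indep Mi (S0 :|: Ni :|: No).
Proof.
move=> sST iT /and4P[iSN _ sNi _] /and4P[_ iTN _ dNo].
apply: indep_setU_mspan iT iTN _ _ iSN.
  exact: disjointWr (subset_mspan Mi Tf) dNo.
by rewrite subUset sNi (subset_trans sST (subset_mspan Mi Tf)).
Qed.

End MarkingGreedyInvariants.

Local Open Scope ring_scope.

Theorem lemma6 (R : archiRealFieldType) (E : finType) (M1 M2 : matroid E)
  (f p : R) (hf : 0 < f < 1) (hp : 0 < p < 1)
  (pi : seq E) (hpi : perm_eq pi (enum E)) (Psi : E -> bool) :
  let m := #|E| in
  let k := Num.truncn (f * m%:R) in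
  let: (S0, N1, N2) := marking_greedy M1 M2 Psi k pi in
  indep M1 (S0 :|: N1 :|: N2) /\ indep M2 (S0 :|: N1 :|: N2).
Proof.
move=> m k; rewrite /marking_greedy.
have := phaseA_indep M1 M2 Psi (take k pi).
case: phaseA => S0 Tf /and3P[sST iT1 iT2].
have := phaseB_indep M1 M2 (drop k pi)
  (phaseB_inv0 sST iT1 iT2) (phaseB_inv0 sST iT2 iT1).
case: phaseB => N1 N2 [inv1 inv2].
split; first exact: phaseB_inv_indep inv1 inv2.
by rewrite setUAC; exact: phaseB_inv_indep inv2 inv1.
Qed.
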